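(* Let $r\geq 3$, let $D$ be an $m$-colored semicomplete $r$-partite digraph, let $k\in\{2,3\}$, and let $x,y$ be distinct vertices of $D$. Suppose there exists a directed path from $x$ to $y$ in $D$ that uses exactly $k$ colors, and there is no directed path from $y$ to $x$ in $D$ using at most $k$ colors. Then $d(x,y)\leq 4$.
   Context: A semicomplete $r$-partite digraph ($r\ge 2$) is a digraph whose vertex set is partitioned into $r$ nonempty independent sets (partite sets) such that for any two vertices $u,v$ in different partite sets at least one of the arcs $(u,v)$, $(v,u)$ is present (both may be present); there are no arcs inside a partite set. An $m$-colored digraph is a digraph whose arcs are each assigned one of $m$ colors. A directed path (no repeated vertices) is $j$-colored if its arcs use exactly $j$ distinct colors; it uses at most $k$ colors if it is $j$-colored for some $1\le j\le k$. $d(x,y)$ denotes the minimum number of arcs of a directed path from $x$ to $y$. *)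

From mathcomp Require Import all_boot.
Set Implicit Arguments. Unset Strict Implicit. Unset Printing Implicit Defensive.

(* A semicomplete r-partite digraph on the finite vertex type T:
   part : T -> 'I_r assigns each vertex its partite set, arc is the arc relation. *)
Definition semicomplete_multipartite (T : finType) (r : nat)
    (part : T -> 'I_r) (arc : rel T) : Prop :=
  [/\ forall i : 'I_r, exists v : T, part v = i,
      forall u v, arc u v -> part u != part v              (* parts independent, no loops *)
    & forall u v, part u != part v -> arc u v || arc v u].

(* x :: p is a directed path (no repeated vertices) from x to y. *)
Definition dpath (T : finType) (arc : rel T) (x y : T) (p : seq T) : bool :=
  [&& path arc x p, uniq (x :: p) & last x p == y].

Definition ncolors (T : finType) (m : nat) (col : T -> T -> 'I_m)
    (x : T) (p : seq T) : nat :=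
  size (undup (pairmap col x p)).

(* d(x,y) <= n : there is a directed x-y path with at most n arcs. *)
Definition dist_le (T : finType) (arc : rel T) (x y : T) (n : nat) : Prop :=
  exists p : seq T, dpath arc x y p /\ size p <= n.

From mathcomp Require Import all_boot.

Set Implicit Arguments.
Unset Strict Implicit.
Unset Printing Implicit Defensive.

(* Since k >= 2 and every y-x path with one or two arcs uses one
   or two colors, the hypothesis forbids the arc (y,x) and every 2-path
   y -> c -> x.  If x and y lie in different partite sets, semicompleteness
   then yields the arc (x,y).  Otherwise every vertex c outside the partite
   set of x satisfies (x,c) or (c,y) is an arc, since (c,x) and (y,c) together
   would form a forbidden 2-path.  Under this "shortcut" property, any x-y path
   with at least five arcs contains, at position 2 or 3, a vertex c outside the
   partite set of x (two consecutive vertices cannot both lie in it); the arc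
   (x,c) gives a strictly shorter x-y path, while the arc (c,y) gives an x-y
   path with at most four arcs. *)

Section PathSurgery.
Variables (T : finType) (arc : rel T).

Lemma dpath_skip (x y c : T) (p1 p2 : seq T) :
  dpath arc x y (p1 ++ c :: p2) -> arc x c -> dpath arc x y (c :: p2).
Proof.
case/and3P=> pth uq lst xc; apply/and3P; split.
- by move: pth; rewrite cat_path /= xc => /and3P[].
- by apply: subseq_uniq uq; rewrite /= eqxx suffix_subseq.
- by rewrite last_cat in lst.
Qed.

Lemma dpath_jump (x y c : T) (p1 p2 : seq T) :
  dpath arc x y (p1 ++ c :: p2) -> arc c y -> c != y ->
  dpath arc x y (p1 ++ [:: c; y]).
Proof.
case/and3P=> pth uq /eqP lst cy c_neq_y.
have y_in_p2 : y \in p2.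
  have last_y : last c p2 = y by rewrite -lst last_cat.
  by have := mem_last c p2; rewrite last_y inE eq_sym (negPf c_neq_y).
apply/and3P; split.
- by move: pth; rewrite !cat_path /= cy andbT => /and3P[-> ->].
- apply: subseq_uniq uq; rewrite -!cat_cons subseq_cat2l /= eqxx.
  by rewrite sub1seq.
- by rewrite last_cat.
Qed.

End PathSurgery.

Lemma ncolors_bounds (T : finType) (m : nat) (col : T -> T -> 'I_m)
    (x : T) (p : seq T) :
  0 < size p -> 0 < ncolors col x p <= size p.
Proof.
case: p => [|v p] // _; rewrite /ncolors -(size_pairmap col x) size_undup andbT.
have : col x v \in undup (pairmap col x (v :: p)) by rewrite mem_undup inE eqxx.
by case: undup.
Qed.

Section Shortening.
Variables (T : finType) (r : nat) (part : T -> 'I_r) (arc : rel T).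
Hypothesis arc_parts : forall u v, arc u v -> part u != part v.

Lemma arc_neq (u v : T) : arc u v -> u != v.
Proof. by move=> /arc_parts; apply: contra => /eqP ->. Qed.

Lemma split_outside_part (x : T) (p : seq T) :
  path arc x p -> 3 <= size p ->
  exists p1 c p2, [/\ p = p1 ++ c :: p2, 0 < size p1 <= 2 & part c != part x].
Proof.
case: p => [|a1 [|a2 [|a3 p]]] // /and4P[_ _ a23 _] _.
have [a2x | a2_out] := eqVneq (part a2) (part x).
- by exists [:: a1; a2], a3, p; rewrite -a2x eq_sym arc_parts.
- by exists [:: a1], a2, (a3 :: p).
Qed.

Lemma shortcut_of_no_2path (x y : T) :
  (forall u v, part u != part v -> arc u v || arc v u) ->
  part x = part y -> (forall c, arc y c -> arc c x -> False) ->
  forall c, part c != part x -> arc x c || arc c y.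
Proof.
move=> semicomplete same_part no_2path c c_out.
have x_c : part x != part c by rewrite eq_sym.
have c_y : part c != part y by rewrite -same_part.
have /orP[-> // | cx] := semicomplete x c x_c.
have /orP[-> | yc] := semicomplete c y c_y; first by rewrite orbT.
by case: (no_2path c yc cx).
Qed.

Lemma shortcut_dist_le (x y : T) (p : seq T) :
  (forall c, part c != part x -> arc x c || arc c y) ->
  dpath arc x y p -> dist_le arc x y 4.
Proof.
move=> shortcut; elim: {p}_.+1 {-2}p (ltnSn (size p)) => // n IH p.
rewrite ltnS => size_p dp.
have [short | long] := leqP (size p) 4; first by exists p.
have pth : path arc x p by case/and3P: dp.
have [p1 [c [p2 [def_p /andP[p1_gt0 p1_le2] c_out]]]] :=
  split_outside_part pth (ltnW (ltnW long)).
rewrite {}def_p in dp size_p.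
case/orP: (shortcut c c_out) => [xc | cy].
- apply: (IH (c :: p2)); last exact: dpath_skip dp xc.
  by apply: leq_trans size_p; rewrite size_cat -[X in X < _]add0n ltn_add2r.
- exists (p1 ++ [:: c; y]); split; first exact: dpath_jump dp cy (arc_neq cy).
  by rewrite size_cat addn2 !ltnS.
Qed.

End Shortening.

Theorem mainTheorem2 (T : finType) (r m : nat) (part : T -> 'I_r) (arc : rel T)
    (col : T -> T -> 'I_m) (k : nat) (x y : T) :
  3 <= r ->
  semicomplete_multipartite part arc ->
  (k == 2) || (k == 3) ->
  x != y ->
  (exists p : seq T, dpath arc x y p /\ ncolors col x p = k) ->
  ~ (exists q : seq T, [/\ dpath arc y x q, 1 <= ncolors col y q & ncolors col y q <= k]) ->
  dist_le arc x y 4.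
Proof.
move=> _ [_ arc_parts semicomplete] k_23 x_neq_y [p [dp _]] no_return.
have k_ge2 : 2 <= k by case/orP: k_23 => /eqP ->.
(* y-x paths with one or two arcs use at most k colors, hence do not exist *)
have no_short_return q : dpath arc y x q -> 0 < size q <= 2 -> False.
  move=> dq /andP[q_gt0 q_le2]; apply: no_return; exists q.
  have /andP[-> ncol_le] := ncolors_bounds col y q_gt0.
  by split=> //; apply: leq_trans ncol_le (leq_trans q_le2 k_ge2).
have no_arc_yx : ~~ arc y x.
  apply/negP=> yx; apply: (no_short_return [:: x]) => //.
  by rewrite /dpath /= yx inE eq_sym x_neq_y eqxx.
have no_2path c : arc y c -> arc c x -> False.
  move=> yc cx; apply: (no_short_return [:: c; x]) => //.
  rewrite /dpath /= yc cx !inE eqxx negb_or (arc_neq arc_parts yc).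
  by rewrite (arc_neq arc_parts cx) eq_sym x_neq_y.
have [same_part | diff_part] := eqVneq (part x) (part y); last first.
  have /orP[xy | yx] := semicomplete _ _ diff_part; last by rewrite yx in no_arc_yx.
  by exists [:: y]; rewrite /dpath /= xy inE x_neq_y eqxx.
apply: (shortcut_dist_le arc_parts _ dp) => c.
exact: shortcut_of_no_2path semicomplete same_part no_2path c.
Qed.
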